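(* Let $Q_1=(U,R_1)$ be an interval order and $Q_2=(U,R_2)$ a partial order on the same finite set $U$, such that $Q_1$ and $Q_2$ do not contradict each other. Then there exists a linear order $Q_0$ on $U$ that is a linear extension of both $Q_1$ and $Q_2$.
   Context: An interval order is a partial order whose elements $x$ can be assigned real intervals $I_x$ such that $x<y$ iff $I_x$ lies entirely to the left of $I_y$. Two partial orders $Q_1,Q_2$ on $U$ contradict each other if there are $u,v\in U$ with $u<_{Q_1}v$ and $v<_{Q_2}u$. A linear order $Q_0$ is a linear extension of $Q$ if $u<_Q v$ implies $u<_{Q_0}v$. *)

From mathcomp Require Import all_boot.
From Stdlib Require Import Reals.
Set Implicit Arguments. Unset Strict Implicit. Unset Printing Implicit Defensive.

Definition strict_partial_order (U : Type) (R : U -> U -> Prop) : Prop :=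
  (forall u, ~ R u u) /\ (forall u v w, R u v -> R v w -> R u w).

Definition linear_order (U : Type) (R : U -> U -> Prop) : Prop :=
  strict_partial_order R /\ (forall u v, u <> v -> R u v \/ R v u).

(* Interval order: each x gets a closed real interval [l x, r x] (l x <= r x),
   and x < y iff I_x lies entirely to the left of I_y, i.e. r x < l y. *)
Definition interval_order (U : Type) (R : U -> U -> Prop) : Prop :=
  strict_partial_order R /\
  exists (l r : U -> Rdefinitions.R),
    (forall x, Rle (l x) (r x)) /\
    (forall x y, R x y <-> Rlt (r x) (l y)).

Definition contradict (U : Type) (R1 R2 : U -> U -> Prop) : Prop :=
  exists u v, R1 u v /\ R2 v u.

Definition linear_extension (U : Type) (R0 R : U -> U -> Prop) : Prop :=
  linear_order R0 /\ (forall u v, R u v -> R0 u v).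

(* Relate x to y when x <=2 p <=1 q <=2 y for some p, q (reflexive closures).
   This relation is transitive because an interval order contains no 2+2:
   from p <1 q and p' <1 q' we get p <1 q' or p' <1 q, and the second option
   would contradict q <=2 p'.  It is antisymmetric for the same reason, so it
   is a partial order containing R1 and R2, and any linear extension of its
   strict part (which exists on a finite set) extends both. *)
From mathcomp Require Import all_boot.
From mathcomp Require Import boolp zify.
From Stdlib Require Import Reals Lra.
Set Implicit Arguments. Unset Strict Implicit.

Definition reflc (U : Type) (R : U -> U -> Prop) (x y : U) : Prop :=
  x = y \/ R x y.

Lemma reflc_trans (U : Type) (R : U -> U -> Prop) (x y z : U) :
  strict_partial_order R -> reflc R x y -> reflc R y z -> reflc R x z.
Proof.
move=> [_ Rtr] [->|Rxy] [<-|Ryz]; rewrite /reflc; auto.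
by right; apply: Rtr Rxy Ryz.
Qed.

Lemma reflc_anti (U : Type) (R : U -> U -> Prop) (x y : U) :
  strict_partial_order R -> reflc R x y -> reflc R y x -> x = y.
Proof.
move=> [Rirr Rtr] [//|Rxy] [//|Ryx].
by case: (Rirr x); apply: Rtr Rxy Ryx.
Qed.

Lemma interval_order_2p2_free (U : Type) (R : U -> U -> Prop) (a b c d : U) :
  interval_order R -> R a b -> R c d -> R a d \/ R c b.
Proof.
move=> [_ [l [r [_ Rlr]]]]; rewrite !Rlr => ab cd.
by case: (Rlt_dec (r a) (l d)) => ad; [left|right]; lra.
Qed.

Lemma strict_partial_order_linear_extension (U : finType) (S : U -> U -> Prop) :
  strict_partial_order S -> exists R0, linear_extension R0 S.
Proof.
move=> [Sirr Str].
pose rank x := #|[set y | `[< S y x >]]|.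
have rank_mono x y : S x y -> (rank x < rank y)%N.
  move=> Sxy; apply/proper_card/properP; split.
    by apply/subsetP => z; rewrite !inE => /asboolP Szx; apply/asboolP/(Str _ _ _ Szx).
  by exists x; rewrite inE; [apply/asboolP | apply/negP => /asboolP/Sirr].
have index_inj x y : x <> y -> nat_of_ord (enum_rank x) <> enum_rank y.
  by move=> neq /val_inj/enum_rank_inj.
exists (fun x y => (rank x < rank y)%N \/
                   (rank x = rank y /\ (enum_rank x < enum_rank y)%N)).
split; last by move=> x y /rank_mono; left.
split; first by split=> [x|x y z]; lia.
by move=> x y /index_inj; lia.
Qed.

Section IntervalOrderLinearExtension.

Variables (U : Type) (R1 R2 : U -> U -> Prop).
Hypotheses (R1_interval : interval_order R1) (R2_order : strict_partial_order R2)
           (R1_R2_consistent : ~ contradict R1 R2).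

Lemma R1_not_against_R2 (a b : U) : R1 a b -> reflc R2 b a -> False.
Proof.
move=> R1ab [eq_ba|R2ba]; last by apply: R1_R2_consistent; exists a, b.
by rewrite eq_ba in R1ab; apply: (proj1 (proj1 R1_interval) a).
Qed.

Definition chain (x y : U) : Prop :=
  exists p q, reflc R2 x p /\ reflc R1 p q /\ reflc R2 q y.

Lemma chain_of_R2 (x y : U) : reflc R2 x y -> chain x y.
Proof. by move=> R2xy; exists y, y; rewrite /reflc; auto. Qed.

Lemma chain_of_R1 (x y : U) : R1 x y -> chain x y.
Proof. by move=> R1xy; exists x, y; rewrite /reflc; auto. Qed.

Lemma chain_trans (x y z : U) : chain x y -> chain y z -> chain x z.
Proof.
move=> [p [q [xp [[<-|pq] qy]]]] [p' [q' [yp' [p'q' q'z]]]].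
  by exists p', q'; split; [apply: reflc_trans xp (reflc_trans _ qy yp') |].
have qp' := reflc_trans R2_order qy yp'.
case: p'q' => [eq_p'q'|R1p'q'].
  by rewrite -eq_p'q' in q'z; exists p, q; split; [|split; [right|apply: reflc_trans qp' q'z]].
case: (interval_order_2p2_free R1_interval pq R1p'q') => [pq'|p'q].
  by exists p, q'; split; [|split; [right|]].
by case: (R1_not_against_R2 p'q qp').
Qed.

Lemma chain_R1_acyclic (p q : U) : R1 p q -> chain q p -> False.
Proof.
move=> R1pq [a [b [qa [[eq_ab|R1ab] bp]]]].
  by rewrite -eq_ab in bp; apply: (R1_not_against_R2 R1pq (reflc_trans R2_order qa bp)).
case: (interval_order_2p2_free R1_interval R1pq R1ab) => [R1pb|R1aq].
  exact: R1_not_against_R2 R1pb bp.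
exact: R1_not_against_R2 R1aq qa.
Qed.

Lemma chain_anti (x y : U) : chain x y -> chain y x -> x = y.
Proof.
move=> xy yx; have [p [q [xp [[eq_pq|R1pq] qy]]]] := xy; last first.
  by case: (chain_R1_acyclic R1pq (chain_trans (chain_of_R2 qy) (chain_trans yx (chain_of_R2 xp)))).
have [p' [q' [yp' [[eq_pq'|R1pq'] q'x]]]] := yx; last first.
  by case: (chain_R1_acyclic R1pq' (chain_trans (chain_of_R2 q'x) (chain_trans xy (chain_of_R2 yp')))).
rewrite -eq_pq in qy; rewrite -eq_pq' in q'x.
exact: reflc_anti R2_order (reflc_trans R2_order xp qy) (reflc_trans R2_order yp' q'x).
Qed.

Definition chain_strict (x y : U) : Prop := chain x y /\ x <> y.

Lemma chain_strict_order : strict_partial_order chain_strict.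
Proof.
split=> [x [_ []] // | x y z [xy x_neq_y] [yz _]].
split; first exact: chain_trans xy yz.
by move=> eq_xz; rewrite -eq_xz in yz; apply: x_neq_y (chain_anti xy yz).
Qed.

End IntervalOrderLinearExtension.

Theorem lemma10 (U : finType) (R1 R2 : U -> U -> Prop) :
  interval_order R1 -> strict_partial_order R2 -> ~ contradict R1 R2 ->
  exists R0 : U -> U -> Prop, linear_extension R0 R1 /\ linear_extension R0 R2.
Proof.
move=> R1_interval R2_order consistent.
have [R0 [R0_linear R0_ext]] :=
  strict_partial_order_linear_extension (chain_strict_order R1_interval R2_order consistent).
have [R1_irr _] := proj1 R1_interval; have [R2_irr _] := R2_order.
exists R0; split; split=> // u v uv; apply: R0_ext; split.
- exact: chain_of_R1.
- by move=> eq_uv; rewrite eq_uv in uv; apply: R1_irr uv.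
- by apply: chain_of_R2; right.
- by move=> eq_uv; rewrite eq_uv in uv; apply: R2_irr uv.
Qed.
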